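(* Let $P$ be a finite set of points in $\mathbb{R}^2$ in general position. For all vertices $u,v$ of the convex hull of $P$ and all points $p\in A(u)\setminus A(v)$, after deleting $v$ from $P$, the point $p$ belongs to $A(u)'$, the set of points active for $u$ with respect to $P\setminus\{v\}$.
   Context: Convex layers: $L^1$ is the set of vertices of the convex hull of the current point set, $L^2$ the set of vertices of the convex hull of the remaining points after removing $L^1$. A point $p$ is active for $u\in L^1$ if, upon deleting $u$ and recomputing the first and second convex layers, $p$ moves to the first layer; $A(u)$ is the set of points active for $u$. *)

From HB Require Import structures.
From mathcomp Require Import all_boot all_order all_algebra.
From mathcomp Require Import finmap.
From mathcomp Require Import boolp.
Set Implicit Arguments. Unset Strict Implicit. Unset Printing Implicit Defensive.
Import Order.TTheory GRing.Theory Num.Theory.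
Local Open Scope ring_scope.
Local Open Scope fset_scope.

Definition point (R : realFieldType) := (R * R)%type.

Definition in_conv (R : realFieldType) (Q : {fset point R}) (p : point R) : Prop :=
  exists w : point R -> R,
    (forall q, q \in Q -> 0 <= w q) /\
    \sum_(q <- Q) w q = 1 /\
    \sum_(q <- Q) w q * q.1 = p.1 /\
    \sum_(q <- Q) w q * q.2 = p.2.

(* Twice the signed area of the triangle abc. *)
Definition orient (R : realFieldType) (a b c : point R) : R :=
  (b.1 - a.1) * (c.2 - a.2) - (b.2 - a.2) * (c.1 - a.1).

Definition general_position (R : realFieldType) (P : {fset point R}) : Prop :=
  forall a b c, a \in P -> b \in P -> c \in P ->
    a != b -> b != c -> a != c -> orient a b c != 0.

Definition hull_vertex (R : realFieldType) (S : {fset point R}) (p : point R) : Prop :=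
  p \in S /\ ~ in_conv (S `\ p) p.

Definition layer1 (R : realFieldType) (S : {fset point R}) (p : point R) : Prop :=
  hull_vertex S p.

Definition layer2 (R : realFieldType) (S : {fset point R}) (p : point R) : Prop :=
  p \in S /\ ~ layer1 S p /\
  ~ in_conv ([fset q in S | ~~ `[< layer1 S q >]] `\ p) p.

Definition active (R : realFieldType) (S : {fset point R}) (u p : point R) : Prop :=
  layer2 S p /\ layer1 (S `\ u) p.

From HB Require Import structures.
From mathcomp Require Import all_boot all_order all_algebra.
From mathcomp Require Import finmap.
From mathcomp Require Import boolp.
Local Open Scope ring_scope.
Local Open Scope fset_scope.
Import GRing.Theory.

(* Deleting a point [v] can only shrink convex hulls, so the first layer can
   only gain points and the set of non-first-layer points can only lose
   points.  If [p] is active for [u] but not for [v], deleting [v] keeps [p]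
   off the first layer; hence [p] stays on the second layer of [P \ v], and
   deleting [u] afterwards still promotes it since [P \ {u, v}] is a subset
   of [P \ u]. *)

Lemma in_conv_fsubset (R : realFieldType) (Q Q' : {fset point R}) (p : point R) :
  Q `<=` Q' -> in_conv Q p -> in_conv Q' p.
Proof.
move=> sQQ' [w [w_ge0 [w_sum [w_x w_y]]]].
pose w' q := if q \in Q then w q else 0.
have sum_w' (F : point R -> R) :
    \sum_(q <- Q') w' q * F q = \sum_(q <- Q) w q * F q.
  rewrite -(big_fset_incl _ sQQ'); last by move=> q _ /negbTE qQ; rewrite /w' qQ mul0r.
  by apply: eq_big_seq => q qQ; rewrite /w' qQ.
exists w'; split; [|split; [|split]].
- by move=> q _; rewrite /w'; case: ifP => // /w_ge0.
- rewrite -w_sum; under eq_bigr do rewrite -[w' _]mulr1.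
  by rewrite sum_w'; under eq_bigr do rewrite mulr1.
- exact: (etrans (sum_w' fst)).
- exact: (etrans (sum_w' snd)).
Qed.

Lemma layer1_fsubset (R : realFieldType) (S S' : {fset point R}) (p : point R) :
  S' `<=` S -> p \in S' -> layer1 S p -> layer1 S' p.
Proof.
move=> sS'S pS' [_ p_nconv]; split=> // p_conv; apply: p_nconv.
exact: in_conv_fsubset (fsetSD _ sS'S) p_conv.
Qed.

Lemma layer2_not_layer1 (R : realFieldType) (S : {fset point R}) (p : point R) :
  layer2 S p -> ~ layer1 S p.
Proof. by case=> _ []. Qed.

Lemma layer2_neq_layer1 (R : realFieldType) (S : {fset point R}) (p v : point R) :
  layer2 S p -> layer1 S v -> p != v.
Proof. by move=> /layer2_not_layer1 p_n1 v1; apply: contra_notN p_n1 => /eqP->. Qed.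

Lemma non_layer1_fsetD1 (R : realFieldType) (S : {fset point R}) (v : point R) :
  [fset q in S `\ v | ~~ `[< layer1 (S `\ v) q >]] `<=`
  [fset q in S | ~~ `[< layer1 S q >]].
Proof.
apply/fsubsetP => q; rewrite !inE /= => /andP[/andP[qv qS] /asboolPn q_n1].
rewrite qS; apply/asboolPn => q1; apply: q_n1.
by apply: layer1_fsubset q1; rewrite ?fsubsetDl // in_fsetD1 qv qS.
Qed.

Lemma layer2_fsetD1 (R : realFieldType) (S : {fset point R}) (p v : point R) :
  layer2 S p -> p != v -> ~ layer1 (S `\ v) p -> layer2 (S `\ v) p.
Proof.
move=> [pS [_ p_nconv]] pv p_n1; split; first by rewrite in_fsetD1 pv pS.
split=> // p_conv; apply: p_nconv.
apply: in_conv_fsubset p_conv; apply: fsetSD; exact: non_layer1_fsetD1.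
Qed.

Theorem lemma3 (R : realFieldType) (P : {fset point R}) :
  general_position P ->
  forall u v p : point R,
    layer1 P u -> layer1 P v ->
    active P u p -> ~ active P v p ->
    active (P `\ v) u p.
Proof.
move=> _ u v p _ v1 [p2 p1u] p_nav.
have pv : p != v by apply: layer2_neq_layer1 p2 v1.
have p_n1v : ~ layer1 (P `\ v) p by move=> p1v; apply: p_nav.
split; first exact: layer2_fsetD1.
have [pPu _] := p1u.
apply: layer1_fsubset p1u; first by apply/fsetSD/fsubsetDl.
by move: pPu; rewrite !in_fsetD1 pv => /andP[-> ->].
Qed.
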